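(* Let $\alpha\ge1$ and $0<\theta,b\le1$. Let $\nu,\mu$ be the Gibbs distributions of two Ising models $(G,J^\nu,h^\nu)$ and $(G,J^\mu,h^\mu)$ on $G=(V,E)$. If $d_{\mathrm{par}}(\nu,\mu)\ge\theta$ and both $\nu$ and $\mu$ are $b$-marginally bounded, then $$D_{\chi^\alpha}(\nu\|\mu)\ \ge\ B_{\alpha,b}(\theta)\sum_{\sigma\in\{-1,+1\}^V}\mu(\sigma)\left(\frac{\nu(\sigma)}{\mu(\sigma)}+1\right)^\alpha,$$ where, writing $s=\left(\frac{b^{2\alpha}\theta^\alpha}{2}\right)^{1/(\alpha+1)}$, $$B_{\alpha,b}(\theta)=\frac{b^{2\alpha}\theta^\alpha}{2}\,(s+2)^{-\alpha}\,(2s+1)^{-1}.$$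
   Context: An Ising model $(G,J,h)$ on $G=(V,E)$ consists of a symmetric $J\in\mathbb{R}^{V\times V}$ with $J_{uv}\ne0$ only if $\{u,v\}\in E$, and $h\in\mathbb{R}^V$; its Gibbs distribution on $\{-1,+1\}^V$ is $\mu(\sigma)\propto\exp(\tfrac12\sigma^TJ\sigma+h^T\sigma)$. The $\chi^\alpha$-divergence is $D_{\chi^\alpha}(\nu\|\mu)=\sum_\sigma\mu(\sigma)\cdot\frac12\left|\frac{\nu(\sigma)}{\mu(\sigma)}-1\right|^\alpha$. The parameter distance is $d_{\mathrm{par}}(\nu,\mu)=\max\left\{\max_{u,v}|J^\nu_{uv}-J^\mu_{uv}|,\ \max_{v\in V}\frac{|h^\nu(v)-h^\mu(v)|}{\deg(v)+1}\right\}$. $\mu$ is $b$-marginally bounded if for every $\Lambda\subseteq V$, pinning $\sigma\in\{-1,+1\}^\Lambda$, $v\notin\Lambda$, $c\in\{-1,+1\}$, the conditional marginal probability that $v$ takes value $c$ given $\sigma$ on $\Lambda$ is at least $b$. *)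

From HB Require Import structures.
From mathcomp Require Import all_boot all_order all_algebra.
From mathcomp Require Import all_classical all_reals all_analysis.
Set Implicit Arguments. Unset Strict Implicit. Unset Printing Implicit Defensive.
Import Order.TTheory GRing.Theory Num.Theory.
Local Open Scope ring_scope.

Section Ising.
Variables (R : realType) (V : finType).

(* spin configurations {-1,+1}^V, encoded as boolean functions (true = +1) *)
Definition config := {ffun V -> bool}.
Definition spin (s : config) (v : V) : R := if s v then 1 else -1.

Definition simple_graph (E : rel V) := symmetric E /\ irreflexive E.

Definition is_ising (E : rel V) (J : V -> V -> R) (h : V -> R) :=
  (forall u v, J u v = J v u) /\ (forall u v, J u v != 0 -> E u v).

Definition ising_weight (J : V -> V -> R) (h : V -> R) (s : config) : R :=
  expR (2^-1 * (\sum_u \sum_v J u v * spin s u * spin s v)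
        + \sum_v h v * spin s v).

Definition gibbs (J : V -> V -> R) (h : V -> R) (s : config) : R :=
  ising_weight J h s / \sum_t ising_weight J h t.

Definition chi_div (alpha : R) (nu mu : config -> R) : R :=
  \sum_s mu s * (2^-1 * (`| nu s / mu s - 1 | `^ alpha)).

Definition deg (E : rel V) (v : V) : nat := #|[set u | E v u]|.

Definition dpar (E : rel V) (Jn : V -> V -> R) (hn : V -> R)
    (Jm : V -> V -> R) (hm : V -> R) : R :=
  Num.max (\big[Num.max/0]_u \big[Num.max/0]_v `|Jn u v - Jm u v|)
          (\big[Num.max/0]_v (`|hn v - hm v| / (deg E v).+1%:R)).

Definition agree (L : {set V}) (tau s : config) : bool :=
  [forall v in L, s v == tau v].

Definition cond_marg (mu : config -> R) (L : {set V}) (tau : config)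
    (v : V) (c : bool) : R :=
  (\sum_(s | agree L tau s && (s v == c)) mu s) /
  (\sum_(s | agree L tau s) mu s).

Definition marg_bounded (mu : config -> R) (b : R) :=
  forall (L : {set V}) (tau : config) (v : V) (c : bool),
    v \notin L -> b <= cond_marg mu L tau v c.

End Ising.

Definition Bconst (R : realType) (alpha b theta : R) : R :=
  let a := b `^ (2 * alpha) * theta `^ alpha / 2 in
  let s := a `^ (1 / (alpha + 1)) in
  a * (s + 2) `^ (- alpha) * (2 * s + 1)^-1.

From HB Require Import structures.
From mathcomp Require Import all_boot all_order all_algebra.
From mathcomp Require Import all_classical all_reals all_analysis.
From mathcomp Require Import ring lra.
Set Implicit Arguments. Unset Strict Implicit. Unset Printing Implicit Defensive.
Import Order.TTheory GRing.Theory Num.Theory.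
Local Open Scope ring_scope.

(* Pair each configuration [s] with its flip at a vertex [v].  On such a pair
   the log-odds of [nu] against [mu] is twice the difference of the local
   fields at [v], and [b]-marginal boundedness keeps both points of the pair
   at mass fraction at least [b]; so the pair carries total variation at least
   [b |field gap|] times its [mu]-mass.  If the external fields at [v] differ by
   [theta (deg v + 1)] while no coupling differs by [theta], the field gap at [v]
   is at least [theta].  If a coupling [J v u] differs by [theta], the field gaps
   at [s] and at [s] flipped at [u] add up to at least [2 theta], and marginal
   boundedness at [u] compares the masses of the two pairs.  Either way
   [sum |nu - mu| >= b^2 theta].  Jensen's inequality for [x ^ alpha] turns this
   into [D >= a := (b^2 theta)^alpha / 2], and splitting [(r + 1)^alpha]
   according to whether [|r - 1| <= s], with [s ^ (alpha + 1) = a], gives the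
   bound. *)

Section real_inequalities.
Variable R : realType.
Implicit Types (alpha tau x r s a : R).

(* Young's inequality with the conjugate exponents [alpha] and [alpha / (alpha - 1)]. *)
Lemma powR_ge_tangent alpha tau x : 1 <= alpha -> 0 < tau -> 0 <= x ->
  alpha * tau `^ (alpha - 1) * x - (alpha - 1) * tau `^ alpha <= x `^ alpha.
Proof.
move=> alpha_ge1 tau_gt0 x_ge0.
have [->|alpha_neq1] := eqVneq alpha 1.
  by rewrite subrr powRr0 (powRr1 x_ge0) (powRr1 (ltW tau_gt0)); lra.
have alpha_gt1 : 1 < alpha by rewrite lt_neqAle eq_sym alpha_neq1.
have alpha_gt0 : 0 < alpha by lra.
have alpha1_gt0 : 0 < alpha - 1 by rewrite subr_gt0.
pose q := alpha / (alpha - 1).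
have q_gt0 : 0 < q by rewrite divr_gt0.
have conj_q : alpha^-1 + q^-1 = 1 by rewrite /q invf_div; field; rewrite gt_eqF.
have young := conjugate_powR x_ge0 (powR_ge0 tau (alpha - 1)) alpha_gt0 q_gt0 conj_q.
have powq : (tau `^ (alpha - 1)) `^ q = tau `^ alpha.
  by rewrite -powRrM /q; congr (_ `^ _); field; rewrite gt_eqF.
rewrite powq -(ler_pM2l alpha_gt0) in young.
have expand : alpha * (x `^ alpha / alpha + tau `^ alpha / q)
    = x `^ alpha + (alpha - 1) * tau `^ alpha.
  by rewrite /q; field; rewrite !gt_eqF.
rewrite expand in young; lra.
Qed.

Lemma jensen_powR (I : finType) (w x : I -> R) alpha tau :
  1 <= alpha -> 0 < tau -> (forall i, 0 <= w i) -> (forall i, 0 <= x i) ->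
  \sum_i w i = 1 -> tau <= \sum_i w i * x i ->
  tau `^ alpha <= \sum_i w i * x i `^ alpha.
Proof.
move=> alpha_ge1 tau_gt0 w_ge0 x_ge0 w_sum1 tau_le.
set c := alpha * tau `^ (alpha - 1).
have c_ge0 : 0 <= c by rewrite mulr_ge0 ?powR_ge0 //; lra.
have tangent : \sum_i w i * (c * x i - (alpha - 1) * tau `^ alpha)
    <= \sum_i w i * x i `^ alpha.
  by apply: ler_sum => i _; rewrite ler_wpM2l // powR_ge_tangent.
have linear : \sum_i w i * (c * x i - (alpha - 1) * tau `^ alpha)
    = c * \sum_i w i * x i - (alpha - 1) * tau `^ alpha * \sum_i w i.
  by rewrite !mulr_sumr -sumrB; apply: eq_bigr => i _; ring.
rewrite linear w_sum1 mulr1 in tangent.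
have c_tau : c * tau = alpha * tau `^ alpha.
  by rewrite /c -mulrA [_ * tau]mulrC mulr_powRB1 //; lra.
have := ler_wpM2l c_ge0 tau_le; lra.
Qed.

(* Split according to whether [|r - 1| <= s]. *)
Lemma powR_addr1_le alpha r s : 1 <= alpha -> 0 < s -> 0 <= r ->
  (r + 1) `^ alpha <= (s + 2) `^ alpha + ((s + 2) / s) `^ alpha * `|r - 1| `^ alpha.
Proof.
move=> alpha_ge1 s_gt0 r_ge0.
have alpha_ge0 : 0 <= alpha by lra.
have small_ge0 : 0 <= ((s + 2) / s) `^ alpha * `|r - 1| `^ alpha.
  by rewrite mulr_ge0 // powR_ge0.
have large_ge0 : 0 <= (s + 2) `^ alpha by rewrite powR_ge0.
have := ler_norm (r - 1); have := normr_ge0 (r - 1).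
have [near|far] := lerP `|r - 1| s => n_ge0 n_ge.
  suff : (r + 1) `^ alpha <= (s + 2) `^ alpha by lra.
  by apply: ge0_ler_powR; rewrite ?nnegrE; lra.
have scale_ge0 : 0 <= (s + 2) / s by rewrite divr_ge0 //; lra.
rewrite -powRM //.
suff : (r + 1) `^ alpha <= ((s + 2) / s * `|r - 1|) `^ alpha by lra.
apply: ge0_ler_powR; rewrite ?nnegrE //; [lra | exact: mulr_ge0 |].
have -> : (s + 2) / s * `|r - 1| = `|r - 1| + 2 * (`|r - 1| / s).
  by field; rewrite gt_eqF.
have : 1 <= `|r - 1| / s by rewrite ler_pdivlMr // mul1r ltW.
lra.
Qed.

Lemma powR_root_balance alpha a : 0 <= a -> 0 < alpha + 1 ->
  (a `^ (1 / (alpha + 1))) `^ alpha * a `^ (1 / (alpha + 1)) = a.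
Proof.
move=> a_ge0 alpha1_gt0; set s := a `^ (1 / (alpha + 1)).
rewrite -[X in _ * X]powRr1 ?powR_ge0 // -powRD; last by rewrite gt_eqF.
by rewrite /s -powRrM mul1r mulVf ?gt_eqF // powRr1.
Qed.

End real_inequalities.

Section two_point.
Variable R : realType.
Implicit Types (b D p q : R).

Lemma odds_ratio_gap_le b D p q :
  0 < b -> b <= p -> b <= 1 - q -> 0 < 1 - p -> 0 < q -> 0 <= D ->
  q * (1 - p) = p * (1 - q) * expR (2 * D) -> b * D <= `|q - p|.
Proof.
move=> b_gt0 b_le_p b_le_q1 p1_gt0 q_gt0 D_ge0 odds.
have p_gt0 : 0 < p by lra.
have q1_gt0 : 0 < 1 - q by lra.
(* [x <= expR (x - 1)] applied to both factors of the odds ratio [expR (2 * D)] *)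
have gap : 2 * D <= (q - p) / p + (q - p) / (1 - q).
  rewrite -ler_expR expRD.
  have -> : expR (2 * D) = q / p * ((1 - p) / (1 - q)).
    apply: (@mulfI _ (p * (1 - q))); first by rewrite mulf_neq0 // gt_eqF.
    by rewrite -odds; field; rewrite !gt_eqF.
  have := expR_ge1Dx ((q - p) / p); have := expR_ge1Dx ((q - p) / (1 - q)).
  have -> : 1 + (q - p) / p = q / p by field; rewrite gt_eqF.
  have -> : 1 + (q - p) / (1 - q) = (1 - p) / (1 - q) by field; rewrite gt_eqF.
  move=> le_B le_A; apply: ler_pM => //; rewrite divr_ge0 //; lra.
have [qp_ge0|qp_lt0] := lerP 0 (q - p); last first.
  have : (q - p) / p < 0 by rewrite pmulr_llt0 ?invr_gt0.
  have : (q - p) / (1 - q) < 0 by rewrite pmulr_llt0 ?invr_gt0.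
  lra.
have gap_p : (q - p) / p <= (q - p) / b by rewrite ler_wpM2l // lef_pV2 ?posrE.
have gap_q : (q - p) / (1 - q) <= (q - p) / b by rewrite ler_wpM2l // lef_pV2 ?posrE.
have : D <= (q - p) / b by move: gap gap_p gap_q; set C := (q - p) / b; lra.
by rewrite ger0_norm // ler_pdivlMr // mulrC.
Qed.

Lemma normalized_dist_le (x1 x2 y1 y2 : R) :
  0 < x1 -> 0 < x2 -> 0 < y1 -> 0 < y2 ->
  (x1 + x2) * `|y1 / (y1 + y2) - x1 / (x1 + x2)| <= `|y1 - x1| + `|y2 - x2|.
Proof.
move=> x1_gt0 x2_gt0 y1_gt0 y2_gt0.
set X := x1 + x2; set Y := y1 + y2; set a := X * y1 / Y.
have X_gt0 : 0 < X by rewrite addr_gt0.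
have Y_gt0 : 0 < Y by rewrite addr_gt0.
rewrite -[W in W * _]gtr0_norm // -normrM.
have -> : X * (y1 / Y - x1 / X) = a - x1 by rewrite /a; field; rewrite !gt_eqF.
have Xa : X - a = X * y2 / Y by rewrite /a /X /Y; field; rewrite gt_eqF.
have := ler_norm (y1 - x1); have := ler_norm (x1 - y1).
have := ler_norm (y2 - x2); have := ler_norm (x2 - y2).
rewrite (distrC x1) (distrC x2) => d1 d2 d3 d4.
have [XY|YX] := lerP X Y.
  have : a <= y1 by rewrite /a ler_pdivrMr // mulrC ler_wpM2l //; lra.
  have : X - a <= y2 by rewrite Xa ler_pdivrMr // mulrC ler_wpM2l //; lra.
  rewrite ler_norml /X; move=> *; apply/andP; split; lra.
have : y1 <= a by rewrite /a ler_pdivlMr // [X * _]mulrC ler_wpM2l //; lra.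
have : y2 <= X - a by rewrite Xa ler_pdivlMr // [X * _]mulrC ler_wpM2l //; lra.
rewrite ler_norml /X; move=> *; apply/andP; split; lra.
Qed.

Lemma pair_dist_ge_odds_gap (b D x1 x2 y1 y2 : R) :
  0 < b -> 0 < x1 -> 0 < x2 -> 0 < y1 -> 0 < y2 ->
  b * (x1 + x2) <= x1 -> b * (x1 + x2) <= x2 ->
  b * (y1 + y2) <= y1 -> b * (y1 + y2) <= y2 ->
  y1 * x2 = x1 * y2 * expR (2 * D) ->
  b * `|D| * (x1 + x2) <= `|y1 - x1| + `|y2 - x2|.
Proof.
move=> b_gt0; wlog D_ge0 : D x1 x2 y1 y2 / 0 <= D => [sym|].
  have [|D_lt0] := lerP 0 D; first exact: sym.
  move=> x1_gt0 x2_gt0 y1_gt0 y2_gt0 bx1 bx2 by1 by2 odds.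
  rewrite (addrC x1) in bx1 bx2 *; rewrite (addrC y1) in by1 by2.
  rewrite -(normrN D) (addrC `|y1 - x1|).
  apply: sym => //; first by rewrite oppr_ge0 ltW.
  apply: (@mulIf _ (expR (2 * D))); first by rewrite gt_eqF ?expR_gt0.
  rewrite mulrN expRN mulfVK ?gt_eqF ?expR_gt0 //.
  by rewrite [y2 * x1]mulrC -odds mulrC.
move=> x1_gt0 x2_gt0 y1_gt0 y2_gt0 bx1 bx2 by1 by2 odds.
set X := x1 + x2 in bx1 bx2 *; set Y := y1 + y2 in by1 by2.
have X_gt0 : 0 < X by rewrite addr_gt0.
have Y_gt0 : 0 < Y by rewrite addr_gt0.
have p1E : 1 - x1 / X = x2 / X by rewrite /X; field; rewrite gt_eqF.
have q1E : 1 - y1 / Y = y2 / Y by rewrite /Y; field; rewrite gt_eqF.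
have : b * D <= `|y1 / Y - x1 / X|.
  apply: odds_ratio_gap_le; rewrite ?p1E ?q1E ?divr_gt0 ?ler_pdivlMr //.
  have -> : y1 / Y * (x2 / X) = y1 * x2 / (X * Y) by field; rewrite !gt_eqF.
  by rewrite odds; field; rewrite !gt_eqF.
move/(ler_wpM2r (ltW X_gt0)) => gap.
by rewrite ger0_norm //; apply: le_trans gap _; rewrite mulrC; apply: normalized_dist_le.
Qed.

End two_point.

Section flip.
Variable V : finType.
Implicit Types (s : config V) (v w : V).

Definition flip v s : config V := [ffun w => (w == v) (+) s w].

Lemma flipE v s w : flip v s w = (w == v) (+) s w.
Proof. by rewrite ffunE. Qed.

Lemma flip_at v s : flip v s v = ~~ s v.
Proof. by rewrite flipE eqxx. Qed.

Lemma flip_ne v s w : w != v -> flip v s w = s w.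
Proof. by rewrite flipE => /negbTE->. Qed.

Lemma flipK v : involutive (flip v).
Proof. by move=> s; apply/ffunP => w; rewrite !flipE addbA addbb. Qed.

Lemma flip_inj v : injective (flip v).
Proof. exact: inv_inj (flipK v). Qed.

Lemma sum_flip_pairs (R : realType) (P : pred (config V)) v (F : config V -> R) :
  (forall s, P (flip v s) = P s) ->
  \sum_(s | P s) F s = \sum_(s | P s && s v) (F s + F (flip v s)).
Proof.
move=> P_flip; rewrite (bigID (fun s => s v)) /= big_split /=; congr (_ + _).
by rewrite (reindex_inj (@flip_inj v)) /=; apply: eq_bigl => s; rewrite P_flip flip_at negbK.
Qed.

Lemma sum_flip_pairsT (R : realType) v (F : config V -> R) :
  \sum_s F s = \sum_(s : config V | s v) (F s + F (flip v s)).
Proof. exact: (sum_flip_pairs (v := v)). Qed.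

End flip.

Section pinning.
Variables (R : realType) (V : finType).
Implicit Types (L : {set V}) (s t : config V) (mu : config V -> R) (u v : V).

Definition pinned_mass mu L s := \sum_(t | agree L s t) mu t.

Lemma agree_setT s t : agree [set: V] s t = (t == s).
Proof.
apply/forall_inP/eqP => [same|-> w _ //].
by apply/ffunP => w; apply/eqP/same; rewrite inE.
Qed.

Lemma agree_setU1 L u s t : agree (u |: L) s t = agree L s t && (t u == s u).
Proof.
apply/forall_inP/andP => [same|[/forall_inP same /eqP tu] w].
  by split; [apply/forall_inP => w wL|]; apply: same; rewrite !inE ?wL ?orbT ?eqxx.
by rewrite !inE => /orP[/eqP->|/same //]; rewrite tu.
Qed.

Lemma agree_setU1_flip L u s t :
  u \notin L -> agree (u |: L) (flip u s) t = agree L s t && (t u != s u).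
Proof.
move=> uL; rewrite agree_setU1 flip_at; congr (_ && _); last by case: (t u); case: (s u).
apply: eq_forallb_in => w wL; rewrite flip_ne //.
by apply/eqP => wu; rewrite -wu wL in uL.
Qed.

Lemma pinned_mass_gt0 mu L s : (forall t, 0 < mu t) -> 0 < pinned_mass mu L s.
Proof.
move=> mu_gt0; rewrite /pinned_mass (bigD1 s) /=; last by apply/forall_inP.
by rewrite ltr_wpDr ?mu_gt0 // sumr_ge0 // => t _; rewrite ltW.
Qed.

Lemma pinned_mass_setU1 mu L u s : u \notin L ->
  pinned_mass mu L s = pinned_mass mu (u |: L) s + pinned_mass mu (u |: L) (flip u s).
Proof.
move=> uL; rewrite /pinned_mass [LHS](bigID (fun t => t u == s u)) /=.
by congr (_ + _); apply: eq_bigl => t; rewrite (agree_setU1_flip, agree_setU1).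
Qed.

Lemma pinned_mass_setT mu s : pinned_mass mu [set: V] s = mu s.
Proof. by rewrite /pinned_mass (eq_bigl (pred1 s)) ?big_pred1_eq // => t; exact: agree_setT. Qed.

Lemma pinned_mass_setC1 mu v s : pinned_mass mu (~: [set v]) s = mu s + mu (flip v s).
Proof. by rewrite (pinned_mass_setU1 _ _ (u := v)) ?finset.setUCr ?pinned_mass_setT // !inE eqxx. Qed.

Lemma setU1_setC2 u v : u != v -> u |: ~: [set u; v] = ~: [set v].
Proof.
by move=> uv; apply/setP => w; rewrite !inE; case: eqVneq => [->|] //=; rewrite uv.
Qed.

Section marg_bounded.
Variables (mu : config V -> R) (b : R).
Hypotheses (mu_b : marg_bounded mu b) (mu_gt0 : forall t, 0 < mu t).

Lemma marg_bounded_pinned L u s :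
  u \notin L -> b * pinned_mass mu L s <= pinned_mass mu (u |: L) s.
Proof.
move=> uL; have := mu_b s (s u) uL; rewrite /cond_marg ler_pdivlMr ?pinned_mass_gt0 //.
by rewrite mulrC (eq_bigl _ _ (fun t => esym (agree_setU1 L u s t))).
Qed.

Lemma marg_bounded_flip v s : b * (mu s + mu (flip v s)) <= mu s.
Proof.
have := marg_bounded_pinned s (L := ~: [set v]) (u := v).
by rewrite finset.setUCr pinned_mass_setT pinned_mass_setC1 !inE eqxx; apply.
Qed.

Lemma marg_bounded_flip2 u v s : u != v ->
  b * ((mu s + mu (flip v s)) + (mu (flip u s) + mu (flip v (flip u s))))
    <= mu s + mu (flip v s).
Proof.
move=> uv; have uL : u \notin ~: [set u; v] by rewrite !inE eqxx.
have := marg_bounded_pinned s uL.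
by rewrite (pinned_mass_setU1 _ _ uL) setU1_setC2 // !pinned_mass_setC1.
Qed.

End marg_bounded.
End pinning.

Section ising_flip.
Variables (R : realType) (V : finType).
Implicit Types (J : V -> V -> R) (h : V -> R) (s : config V) (u v : V).

Definition local_field J h v s := \sum_w J v w * spin R s w + h v.

Lemma normr_spin s v : `|spin R s v| = 1.
Proof. by rewrite /spin; case: (s v); rewrite ?normrN normr1. Qed.

Lemma spin_flip v s w : spin R (flip v s) w = spin R s w - 2 * spin R s v * (w == v)%:R.
Proof. by rewrite /spin flipE; case: eqVneq => [->|_]; case: (s v); case: (s w) => /=; lra. Qed.

Lemma sum_mul_delta (F : V -> R) v : \sum_w F w * (w == v)%:R = F v.
Proof. by rewrite (bigD1 v) //= eqxx mulr1 big1 ?addr0 // => w /negbTE->; rewrite mulr0. Qed.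

Lemma local_field_flip J h u v s :
  local_field J h v (flip u s) = local_field J h v s - 2 * spin R s u * J v u.
Proof.
rewrite /local_field (eq_bigr (fun w => J v w * spin R s w
    - 2 * spin R s u * (J v w * (w == u)%:R))); last by move=> w _; rewrite spin_flip; ring.
by rewrite sumrB -mulr_sumr sum_mul_delta; ring.
Qed.

Section energy_flip.
Variables (J : V -> V -> R) (h : V -> R) (v : V) (s : config V).
Hypotheses (J_sym : forall u w, J u w = J w u) (J_vv : J v v = 0).

Let c := 2 * spin R s v.

Lemma linear_energy_flip :
  \sum_w h w * spin R (flip v s) w = \sum_w h w * spin R s w - c * h v.
Proof.
rewrite (eq_bigr (fun w => h w * spin R s w - c * (h w * (w == v)%:R))).
  by rewrite sumrB -mulr_sumr sum_mul_delta.
by move=> w _; rewrite spin_flip /c; ring.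
Qed.

Lemma quadratic_energy_flip :
  \sum_u \sum_w J u w * spin R (flip v s) u * spin R (flip v s) w
  = \sum_u \sum_w J u w * spin R s u * spin R s w - 2 * c * \sum_w J v w * spin R s w.
Proof.
have inner u : \sum_w J u w * spin R (flip v s) u * spin R (flip v s) w
    = \sum_w J u w * spin R s u * spin R s w
      - c * ((u == v)%:R * \sum_w J u w * spin R s w) - c * (J u v * spin R s u)
      + c ^+ 2 * ((u == v)%:R * J u v).
  rewrite (eq_bigr (fun w => J u w * spin R s u * spin R s w
      - c * ((u == v)%:R * (J u w * spin R s w))
      - c * (J u w * spin R s u * (w == v)%:R)
      + c ^+ 2 * ((u == v)%:R * (J u w * (w == v)%:R)))); last first.
    by move=> w _; rewrite !spin_flip /c; ring.
  rewrite big_split /= !sumrB -!mulr_sumr.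
  by rewrite (sum_mul_delta (fun w => J u w * spin R s u)) (sum_mul_delta (J u)).
rewrite (eq_bigr _ (fun u _ => inner u)) big_split /= !sumrB -!mulr_sumr.
rewrite !(eq_bigr _ (fun u _ => mulrC (u == v)%:R _)) !sum_mul_delta J_vv.
have -> : \sum_u J u v * spin R s u = \sum_w J v w * spin R s w.
  by apply: eq_bigr => u _; rewrite J_sym.
ring.
Qed.

Lemma ising_weight_flip :
  ising_weight J h s = ising_weight J h (flip v s) * expR (c * local_field J h v s).
Proof.
rewrite /ising_weight -expRD linear_energy_flip quadratic_energy_flip /local_field.
by congr expR; field.
Qed.

Lemma gibbs_flip : gibbs J h s = gibbs J h (flip v s) * expR (c * local_field J h v s).
Proof. by rewrite /gibbs ising_weight_flip mulrAC. Qed.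

End energy_flip.

Lemma partition_gt0 J h : 0 < \sum_t ising_weight J h t.
Proof.
rewrite (bigD1 [ffun=> true]) //= ltr_wpDr ?expR_gt0 //.
by rewrite sumr_ge0 // => t _; rewrite ltW ?expR_gt0.
Qed.

Lemma gibbs_gt0 J h s : 0 < gibbs J h s.
Proof. by rewrite divr_gt0 ?expR_gt0 ?partition_gt0. Qed.

Lemma gibbs_sum1 J h : \sum_s gibbs J h s = 1.
Proof. by rewrite -mulr_suml divff // gt_eqF ?partition_gt0. Qed.

End ising_flip.

Lemma is_ising_diag (R : realType) (V : finType) (E : rel V) (J : V -> V -> R) h v :
  simple_graph E -> is_ising E J h -> J v v = 0.
Proof. by move=> [_ E_irr] [_ J_E]; apply/eqP; apply: contraT => /J_E; rewrite E_irr. Qed.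

Lemma dpar_ge_field_gap (R : realType) (V : finType) (E : rel V)
    (Jn Jm : V -> V -> R) (hn hm : V -> R) (theta : R) :
  0 < theta -> theta <= dpar E Jn hn Jm hm ->
  (forall u v, `|Jn u v - Jm u v| < theta) ->
  exists v, theta * (deg E v).+1%:R <= `|hn v - hm v|.
Proof.
move=> theta_gt0 + J_close; rewrite /dpar le_max => /orP[|].
  move=> /bigmax_geP[|[u _ /bigmax_geP[|[v _]]]]; try lra.
  by have := J_close u v; lra.
move=> /bigmax_geP[|[v _]]; first lra.
by rewrite ler_pdivlMr //; exists v.
Qed.

Section total_variation.
Variables (R : realType) (V : finType) (E : rel V).
Variables (Jn Jm : V -> V -> R) (hn hm : V -> R) (b : R).
Hypotheses (E_simple : simple_graph E).
Hypotheses (n_ising : is_ising E Jn hn) (m_ising : is_ising E Jm hm).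
Hypotheses (b_gt0 : 0 < b).
Hypotheses (n_bounded : marg_bounded (gibbs Jn hn) b).
Hypotheses (m_bounded : marg_bounded (gibbs Jm hm) b).

Local Notation nu := (gibbs Jn hn).
Local Notation mu := (gibbs Jm hm).
Local Notation field_gap v s := (local_field Jn hn v s - local_field Jm hm v s).
Local Notation dist s := `|nu s - mu s|.

Lemma field_gap_ge v s c : (forall w, `|Jn v w - Jm v w| <= c) ->
  `|hn v - hm v| - c * (deg E v)%:R <= `|field_gap v s|.
Proof.
move=> J_close.
have -> : field_gap v s = (hn v - hm v) + \sum_w (Jn v w - Jm v w) * spin R s w.
  rewrite /local_field (eq_bigr _ (fun w _ => mulrBl _ _ _)) sumrB; ring.
suff : `|\sum_w (Jn v w - Jm v w) * spin R s w| <= c * (deg E v)%:R.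
  by have := lerB_normD (hn v - hm v) (\sum_w (Jn v w - Jm v w) * spin R s w); lra.
apply: le_trans (ler_norm_sum _ _ _) _.
rewrite (bigID (fun w => w \in [set u | E v u])) /= [X in _ + X]big1 ?addr0; last first.
  move=> w; rewrite inE => vw_nE.
  have [_ n_E] := n_ising; have [_ m_E] := m_ising.
  have -> : Jn v w = 0 by apply/eqP; apply: contraNT vw_nE => /n_E.
  have -> : Jm v w = 0 by apply/eqP; apply: contraNT vw_nE => /m_E.
  by rewrite subrr mul0r normr0.
rewrite /deg -sum1_card natr_sum mulr_sumr; apply: ler_sum => w _.
by rewrite normrM normr_spin !mulr1.
Qed.

Lemma pair_dist_ge_field_gap v s :
  b * `|field_gap v s| * (mu s + mu (flip v s)) <= dist s + dist (flip v s).
Proof.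
have [Jn_sym _] := n_ising; have [Jm_sym _] := m_ising.
have Jn_vv := is_ising_diag v E_simple n_ising.
have Jm_vv := is_ising_diag v E_simple m_ising.
have flip_bound (rho : config V -> R) : marg_bounded rho b -> (forall t, 0 < rho t) ->
    b * (rho s + rho (flip v s)) <= rho (flip v s).
  by move=> rho_b rho_gt0; have := marg_bounded_flip rho_b rho_gt0 v (flip v s); rewrite flipK addrC.
have := @pair_dist_ge_odds_gap R b (spin R s v * field_gap v s)
  (mu s) (mu (flip v s)) (nu s) (nu (flip v s)).
rewrite normrM normr_spin mul1r; apply; rewrite ?gibbs_gt0 ?marg_bounded_flip ?flip_bound //;
  try exact: gibbs_gt0.
rewrite (gibbs_flip hn s Jn_sym Jn_vv) (gibbs_flip hm s Jm_sym Jm_vv).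
have -> : expR (2 * spin R s v * local_field Jn hn v s)
    = expR (2 * spin R s v * local_field Jm hm v s) * expR (2 * (spin R s v * field_gap v s)).
  by rewrite -expRD; congr expR; ring.
ring.
Qed.

Lemma tv_ge_field_gap v c : (forall s, c <= `|field_gap v s|) -> b * c <= \sum_s dist s.
Proof.
move=> c_le.
have mass1 : \sum_(s : config V | s v) (mu s + mu (flip v s)) = 1.
  by rewrite -sum_flip_pairsT gibbs_sum1.
rewrite (sum_flip_pairsT v) -[b * c]mulr1 -mass1 mulr_sumr.
apply: ler_sum => s _; apply: le_trans (pair_dist_ge_field_gap v s).
apply: ler_wpM2r; first by rewrite addr_ge0 // ltW // gibbs_gt0.
by apply: ler_wpM2l; [exact: ltW | exact: c_le].
Qed.

Lemma quad_dist_ge_coupling_gap u v s c : u != v -> c <= `|Jn v u - Jm v u| ->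
  2 * b ^+ 2 * c * ((mu s + mu (flip v s)) + (mu (flip u s) + mu (flip v (flip u s))))
  <= (dist s + dist (flip v s)) + (dist (flip u s) + dist (flip v (flip u s))).
Proof.
move=> uv c_le.
have pair_s := pair_dist_ge_field_gap v s.
have pair_us := pair_dist_ge_field_gap v (flip u s).
have bX := marg_bounded_flip2 m_bounded (gibbs_gt0 _ _) s uv.
have := marg_bounded_flip2 m_bounded (gibbs_gt0 _ _) (flip u s) uv.
rewrite flipK addrC => bY.
set X := mu s + mu (flip v s) in pair_s bX bY *.
set Y := mu (flip u s) + mu (flip v (flip u s)) in pair_us bX bY *.
have X_gt0 : 0 < X by rewrite addr_gt0 ?gibbs_gt0.
have Y_gt0 : 0 < Y by rewrite addr_gt0 ?gibbs_gt0.
set a := `|field_gap v s| in pair_s; set a' := `|field_gap v (flip u s)| in pair_us.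
(* flipping [u] shifts the field gap at [v] by [2 (Jn v u - Jm v u)], up to sign *)
have gap_sum : 2 * c <= a + a'.
  set d := 2 * spin R s u * (Jn v u - Jm v u).
  have flip_gap : field_gap v (flip u s) = field_gap v s - d.
    by rewrite !local_field_flip /d; ring.
  rewrite /a' flip_gap.
  have := ler_normB (field_gap v s) (field_gap v s - d).
  have -> : field_gap v s - (field_gap v s - d) = d by ring.
  by rewrite /a /d !normrM normr_spin mulr1 ger0_norm //; lra.
have a_ge0 : 0 <= a by apply: normr_ge0.
have a'_ge0 : 0 <= a' by apply: normr_ge0.
have : b * a * (b * (X + Y)) <= b * a * X by rewrite ler_wpM2l // mulr_ge0 // ltW.
have : b * a' * (b * (X + Y)) <= b * a' * Y by rewrite ler_wpM2l // mulr_ge0 // ltW.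
have : 2 * c * (b ^+ 2 * (X + Y)) <= (a + a') * (b ^+ 2 * (X + Y)).
  apply: ler_wpM2r gap_sum; apply: mulr_ge0; [apply: exprn_ge0 | apply: addr_ge0]; exact: ltW.
have -> : b * a * (b * (X + Y)) = a * (b ^+ 2 * (X + Y)) by ring.
have -> : b * a' * (b * (X + Y)) = a' * (b ^+ 2 * (X + Y)) by ring.
have -> : 2 * b ^+ 2 * c * (X + Y) = 2 * c * (b ^+ 2 * (X + Y)) by ring.
lra.
Qed.

Lemma tv_ge_coupling_gap u v c : u != v -> c <= `|Jn v u - Jm v u| ->
  2 * b ^+ 2 * c <= \sum_s dist s.
Proof.
move=> uv c_le.
have flip_u s : flip u s v = s v by rewrite flip_ne // eq_sym.
have mass1 : \sum_(s : config V | s v && s u)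
    ((mu s + mu (flip v s)) + (mu (flip u s) + mu (flip v (flip u s)))) = 1.
  by rewrite -(sum_flip_pairs _ flip_u) -sum_flip_pairsT gibbs_sum1.
rewrite (sum_flip_pairsT v) (sum_flip_pairs _ flip_u).
set k := 2 * b ^+ 2 * c; rewrite -[k]mulr1 -mass1 mulr_sumr; apply: ler_sum => s _.
exact: quad_dist_ge_coupling_gap.
Qed.

Lemma tv_ge_dpar theta : 0 < theta -> b <= 1 -> theta <= dpar E Jn hn Jm hm ->
  b ^+ 2 * theta <= \sum_s dist s.
Proof.
move=> theta_gt0 b_le1 theta_le.
have b2_le_b : b ^+ 2 * theta <= b * theta.
  by rewrite expr2 -mulrA ler_piMl // mulr_ge0 // ltW.
have [[u [v J_gap]]|J_close] := pselect (exists u v, theta <= `|Jn u v - Jm u v|).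
  have vu : v != u.
    apply/eqP => vu; move: J_gap; rewrite vu (is_ising_diag u E_simple n_ising).
    by rewrite (is_ising_diag u E_simple m_ising) subrr normr0; lra.
  apply: le_trans (tv_ge_coupling_gap vu J_gap).
  by rewrite -!mulrA ler_peMl ?ler1n // !mulr_ge0 // ltW.
have J_lt u v : `|Jn u v - Jm u v| < theta by rewrite ltNge; apply/negP => ?; apply: J_close; exists u, v.
have [v h_gap] := dpar_ge_field_gap theta_gt0 theta_le J_lt.
apply: le_trans b2_le_b (tv_ge_field_gap (v := v) _) => s.
have := field_gap_ge s (fun w => ltW (J_lt v w)).
rewrite -natr1 mulrDr mulr1 in h_gap; lra.
Qed.

End total_variation.

Section chi_divergence.
Variables (R : realType) (V : finType) (alpha : R) (nu mu : config V -> R).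
Hypotheses (alpha_ge1 : 1 <= alpha) (mu_gt0 : forall s, 0 < mu s).
Hypotheses (mu_sum1 : \sum_s mu s = 1) (nu_ge0 : forall s, 0 <= nu s).

Local Notation D := (chi_div alpha nu mu).

Lemma chi_divE : D = 2^-1 * \sum_s mu s * `|nu s / mu s - 1| `^ alpha.
Proof. by rewrite /chi_div mulr_sumr; apply: eq_bigr => s _; ring. Qed.

Lemma chi_div_ge_tv tau : 0 < tau -> tau <= \sum_s `|nu s - mu s| ->
  2^-1 * tau `^ alpha <= D.
Proof.
move=> tau_gt0 tau_le; rewrite chi_divE ler_wpM2l ?invr_ge0 ?ler0n //.
apply: jensen_powR => //; first by move=> s; exact: ltW.
rewrite (eq_bigr (fun s => `|nu s - mu s|)) // => s _.
rewrite -{1}(gtr0_norm (mu_gt0 s)) -normrM mulrBr mulr1 mulrCA divff ?gt_eqF //.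
by rewrite mulr1.
Qed.

Lemma moment_le_chi_div s : 0 < s ->
  \sum_t mu t * (nu t / mu t + 1) `^ alpha
    <= (s + 2) `^ alpha + ((s + 2) / s) `^ alpha * (2 * D).
Proof.
move=> s_gt0; rewrite chi_divE [2 * (2^-1 * _)]mulrA divff // mul1r.
set P := (s + 2) `^ alpha; set K := ((s + 2) / s) `^ alpha.
apply: le_trans (_ : \sum_t mu t * (P + K * `|nu t / mu t - 1| `^ alpha) <= _).
  apply: ler_sum => t _; apply: ler_wpM2l; first exact: ltW.
  apply: powR_addr1_le => //.
  by rewrite divr_ge0 ?nu_ge0 // ltW.
rewrite (eq_bigr (fun t => P * mu t + K * (mu t * `|nu t / mu t - 1| `^ alpha))).
  by rewrite big_split /= -!mulr_sumr mu_sum1 mulr1.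
by move=> t _; ring.
Qed.

Lemma chi_div_ge_scaled_moment a s : 0 < s -> s `^ alpha * s = a -> a <= D ->
  a * (s + 2) `^ (- alpha) * (2 * s + 1)^-1 * \sum_t mu t * (nu t / mu t + 1) `^ alpha
    <= D.
Proof.
move=> s_gt0 <- a_le.
have S_gt0 : 0 < s `^ alpha by rewrite powR_gt0.
have P_gt0 : 0 < (s + 2) `^ alpha by rewrite powR_gt0 // addr_gt0.
have ratio : ((s + 2) / s) `^ alpha = (s + 2) `^ alpha / s `^ alpha.
  rewrite powRM ?invr_ge0 ?ltW ?addr_gt0 //.
  by congr (_ * _); rewrite -powR_inv1 ?powR_ge0 // powRAC powR_inv1 // ltW.
have coef_ge0 : 0 <= s `^ alpha * s * (s + 2) `^ (- alpha) * (2 * s + 1)^-1.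
  apply: mulr_ge0; last by rewrite invr_ge0 addr_ge0 // mulr_ge0 // ltW.
  by rewrite !mulr_ge0 ?powR_ge0 // ltW.
apply: le_trans (ler_wpM2l coef_ge0 (moment_le_chi_div s_gt0)) _.
rewrite ratio powRN.
have -> : s `^ alpha * s * ((s + 2) `^ alpha)^-1 * (2 * s + 1)^-1
    * ((s + 2) `^ alpha + (s + 2) `^ alpha / s `^ alpha * (2 * D))
    = (s `^ alpha * s + 2 * D * s) / (2 * s + 1).
  by field; rewrite !gt_eqF // addr_gt0 // mulr_gt0.
rewrite ler_pdivrMr ?addr_gt0 ?mulr_gt0 //; lra.
Qed.

End chi_divergence.

Theorem lemma2p3 (R : realType) (V : finType) (E : rel V)
  (Jn Jm : V -> V -> R) (hn hm : V -> R) (alpha theta b : R) :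
  simple_graph E ->
  is_ising E Jn hn -> is_ising E Jm hm ->
  1 <= alpha -> 0 < theta -> theta <= 1 -> 0 < b -> b <= 1 ->
  theta <= dpar E Jn hn Jm hm ->
  marg_bounded (gibbs Jn hn) b -> marg_bounded (gibbs Jm hm) b ->
  Bconst alpha b theta *
    (\sum_(s : config V) gibbs Jm hm s * (gibbs Jn hn s / gibbs Jm hm s + 1) `^ alpha)
  <= chi_div alpha (gibbs Jn hn) (gibbs Jm hm).
Proof.
move=> E_simple n_ising m_ising alpha_ge1 theta_gt0 _ b_gt0 b_le1 theta_le n_bounded m_bounded.
have tv := tv_ge_dpar E_simple n_ising m_ising b_gt0 n_bounded m_bounded theta_gt0 b_le1 theta_le.
have nu_ge0 s : 0 <= gibbs Jn hn s by exact/ltW/gibbs_gt0.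
have tau_gt0 : 0 < b ^+ 2 * theta by rewrite mulr_gt0 ?exprn_gt0.
have := chi_div_ge_tv alpha_ge1 (@gibbs_gt0 _ _ Jm hm) (gibbs_sum1 Jm hm) tau_gt0 tv.
have -> : 2^-1 * (b ^+ 2 * theta) `^ alpha = b `^ (2 * alpha) * theta `^ alpha / 2.
  by rewrite mulrC powRM ?exprn_ge0 ?ltW // -(powR_mulrn 2 (ltW b_gt0)) -powRrM.
rewrite /Bconst /=; set a := b `^ (2 * alpha) * theta `^ alpha / 2 => a_le.
have a_gt0 : 0 < a by rewrite divr_gt0 ?mulr_gt0 ?powR_gt0.
apply: chi_div_ge_scaled_moment => //.
- exact: gibbs_gt0.
- exact: gibbs_sum1.
- by rewrite powR_gt0.
- by rewrite powR_root_balance ?ltW //; lra.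
Qed.
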